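(* Let $r\ge 1$ and suppose $(\boldsymbol\lambda,\mathbf{s})\in\mathcal{A}_e^r$ is not a Rouquier multipartition. Then $\Psi_r(\boldsymbol\lambda,\mathbf{s})\in\mathcal{A}_e$ is not an $r$-Rouquier partition.
   Context: Fix an integer $e\ge 2$. A partition is a weakly decreasing sequence $\lambda=(\lambda_1,\lambda_2,\dots)$ of non-negative integers with finite sum $|\lambda|$; $\Lambda$ denotes the set of partitions and $\Lambda^{(m)}$ the set of $m$-multipartitions, i.e. $m$-tuples $\boldsymbol\lambda=(\lambda^{(1)},\dots,\lambda^{(m)})$ of partitions. A $\beta$-set is a subset $B\subseteq\mathbb{Z}$ containing all sufficiently small integers and no sufficiently large ones. For $\lambda\in\Lambda$ and $s\in\mathbb{Z}$ set $B_s(\lambda)=\{\lambda_i-i+s : i\ge 1\}$; every $\beta$-set equals $B_s(\lambda)$ for a unique pair $(\lambda,s)$. Let $\mathcal{A}_e=\Lambda\times\mathbb{Z}$ (abacus configurations with $e$ runners) and $\mathcal{A}_e^m=\Lambda^{(m)}\times\mathbb{Z}^m$, where $(\boldsymbol\lambda,\mathbf{s})$ is identified with the $m$-tuple of $\beta$-sets $(B_{s_1}(\lambda^{(1)}),\dots,B_{s_m}(\lambda^{(m)}))$. The map $\eta$: for $(\lambda,s)\in\mathcal{A}_e$ with $B=B_s(\lambda)$ and $0\le i<e$, the set $C_i=\{(b-i)/e : b\in B,\ b\equiv i \bmod e\}$ is a $\beta$-set, so $C_i=B_{t_i}(\rho_i)$ for a unique $(\rho_i,t_i)\in\Lambda\times\mathbb{Z}$;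 set $\eta(\lambda,s)=((\rho_0,\dots,\rho_{e-1}),(t_0,\dots,t_{e-1}))$. The $e$-weight of $\lambda$ is $\mathrm{wt}(\lambda)=\sum_i|\rho_i|$. Rouquier: $(\lambda,s)\in\mathcal{A}_e$ with $\eta(\lambda,s)=(\boldsymbol\rho,\mathbf{t})$ is a Rouquier partition if $\mathrm{wt}(\lambda)\le t_{i+1}-t_i+1$ for all $0\le i<e-1$, and an $r$-Rouquier partition if $\mathrm{wt}(\lambda)\le t_{i+1}-t_i+r$ for all $0\le i<e-1$. $(\boldsymbol\lambda,\mathbf{s})\in\mathcal{A}_e^r$ is a Rouquier multipartition if $(\lambda^{(k)},s_k)$ is a Rouquier partition for every $1\le k\le r$. Uglov's map: for $1\le k\le r$ define $\psi_k:\mathbb{Z}\to\mathbb{Z}$ by $\psi_k(ae+i)=((a+1)r-k)e+i$ for $a\in\mathbb{Z}$, $0\le i<e$. For $(\boldsymbol\lambda,\mathbf{s})\in\mathcal{A}_e^r$ the set $B=\bigsqcup_{k=1}^r\psi_k(B_{s_k}(\lambda^{(k)}))$ is a $\beta$-set, and $\Psi_r(\boldsymbol\lambda,\mathbf{s})$ is the unique $(\tilde\lambda,\tilde s)\in\mathcal{A}_e$ with $B_{\tilde s}(\tilde\lambda)=B$. *)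

From mathcomp Require Import all_boot all_order all_algebra.
Set Implicit Arguments. Unset Strict Implicit. Unset Printing Implicit Defensive.
Import Order.TTheory GRing.Theory Num.Theory.
Local Open Scope ring_scope.

(* A partition is represented by a weakly decreasing finite sequence of
   naturals (implicitly padded with zeros); trailing zeros are harmless. *)
Definition is_partition (la : seq nat) : bool := sorted geq la.

Definition psize (la : seq nat) : nat := sumn la.

(* beta-set B_s(la) = { la_i - i + s : i >= 1 }, as a predicate on int.
   Index i >= 1 is written j.+1 with j : nat. *)
Definition betaset (la : seq nat) (s : int) : int -> Prop :=
  fun b => exists j : nat, b = (nth 0%N la j)%:Z - (j.+1)%:Z + s.

Definition set_eq (B C : int -> Prop) : Prop := forall x, B x <-> C x.

Definition runner (e i : nat) (B : int -> Prop) : int -> Prop :=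
  fun c => exists b, B b /\ (e%:Z %| b - i%:Z)%Z /\ c = ((b - i%:Z) %/ e%:Z)%Z.

Definition is_eta (e : nat) (la : seq nat) (s : int)
  (rho : nat -> seq nat) (t : nat -> int) : Prop :=
  forall i, (i < e)%N ->
    is_partition (rho i) /\ set_eq (runner e i (betaset la s)) (betaset (rho i) (t i)).

Definition eweight (e : nat) (rho : nat -> seq nat) : nat :=
  (\sum_(i < e) psize (rho i))%N.

Definition r_rouquier (e r : nat) (la : seq nat) (s : int) : Prop :=
  forall rho t, is_eta e la s rho t ->
    forall i : nat, (i.+1 < e)%N ->
      (eweight e rho)%:Z <= t i.+1 - t i + r%:Z.

Definition rouquier (e : nat) (la : seq nat) (s : int) : Prop :=
  r_rouquier e 1 la s.

Definition psi (e r k : nat) (x : int) : int :=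
  let a := (x %/ e%:Z)%Z in
  let i := (x %% e%:Z)%Z in
  ((a + 1) * r%:Z - k%:Z) * e%:Z + i.

(* B = disjoint union over 1 <= k <= r of psi_k(B_{s_k}(la^(k))).
   Components are indexed by k : 'I_r, standing for k.+1. *)
Definition uglov_set (e r : nat) (la : 'I_r -> seq nat) (s : 'I_r -> int)
  : int -> Prop :=
  fun b => exists (k : 'I_r) (x : int),
    betaset (la k) (s k) x /\ b = psi e r k.+1 x.

(* Measure a beta-set B against the vacuum {x < 0} on a window [-N, N) containing all
   its non-trivial beads: the charge sum ([x in B] - [x < 0]) and the energy
   sum (2x + 1)([x in B] - [x < 0]) of B_s(la) are s and 2|la| + s^2, so its defect
   energy - charge^2 is 2|la|.  Runner i of the Uglov image interleaves the runners i of the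
   r components, hence its charge is the sum of their charges c_k and its defect is
   r * (sum of their defects) + sum_{j<k} h(c_k - c_j), where h(u) = u(u+1) >= 0.
   Summing over i, wt(Psi) >= r wt(la^(k0)) + (pronic terms of the runners i0 and i0+1), and
   bounding the pronic terms that involve the non-Rouquier component k0 with
   2(b - a - 1) <= h(a) + h(b) gives wt(Psi) > t_{i0+1} - t_{i0} + r. *)

From mathcomp Require Import all_boot all_order all_algebra.
From mathcomp Require Import zify ring lra.
From Stdlib Require Import Classical ClassicalEpsilon.
From Stdlib Require Import FunctionalExtensionality PropExtensionality.
Set Implicit Arguments. Unset Strict Implicit. Unset Printing Implicit Defensive.
Import Order.TTheory GRing.Theory Num.Theory.
Local Open Scope ring_scope.

Lemma set_eq_ext (B C : int -> Prop) : set_eq B C -> B = C.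
Proof.
by move=> BC; apply: functional_extensionality => x; apply: propositional_extensionality.
Qed.

Definition window_sum (N : nat) (f : int -> int) : int :=
  \sum_(0 <= n < (2 * N)%N) f (n%:Z - N%:Z).

Definition indicator (B : int -> Prop) (x : int) : int :=
  if excluded_middle_informative (B x) then 1 else 0.

Definition excess (B : int -> Prop) (x : int) : int :=
  indicator B x - indicator (fun y => y < 0) x.

Definition moment (N : nat) (g : int -> int) (B : int -> Prop) : int :=
  window_sum N (fun x => excess B x * g x).

Definition charge N B := moment N (fun _ => 1) B.
Definition energy N B := moment N (fun x => 2 * x + 1) B.
Definition defect N B := energy N B - charge N B ^+ 2.

Definition beta_bounded (N : nat) (B : int -> Prop) : Prop :=
  (forall x, x < - N%:Z -> B x) /\ (forall x, N%:Z <= x -> ~ B x).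

Lemma window_sum_point N (m a : int) : - N%:Z <= m < N%:Z ->
  window_sum N (fun x => if x == m then a else 0) = a.
Proof.
move=> mN; rewrite /window_sum (eq_bigr (fun n => if n == absz (m + N%:Z) then a else 0)).
  by rewrite -big_mkcond big_nat1_eq; case: ifP => //; lia.
by move=> n _; congr (if _ then _ else _); apply/eqP/eqP; lia.
Qed.

Lemma indicator_add_point (B : int -> Prop) m x : ~ B m ->
  indicator (fun y => B y \/ y = m) x = indicator B x + (x == m)%:R.
Proof.
rewrite /indicator => nBm.
by case: eqP => [->|ne]; do 2 case: excluded_middle_informative => //=; tauto.
Qed.

Lemma moment_add_point N g B m : ~ B m -> - N%:Z <= m < N%:Z ->
  moment N g (fun x => B x \/ x = m) = moment N g B + g m.
Proof.
move=> nBm mN; rewrite -(window_sum_point (g m) mN) /moment /window_sum -big_split.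
apply: eq_bigr => n _ /=; rewrite /excess indicator_add_point //.
by have [->|_] := eqVneq (n%:Z - N%:Z) m; rewrite ?eqxx /=; ring.
Qed.

Lemma moment_vacuum0 N g : moment N g (fun x => x < 0) = 0.
Proof. by rewrite /moment /window_sum big1 // => n _; rewrite /excess subrr mul0r. Qed.

Lemma moment_vacuum N g (G : int -> int) (s : int) :
  G 0 = 0 -> (forall x, G (x + 1) = G x + g x) -> - N%:Z <= s <= N%:Z ->
  moment N g (fun x => x < s) = G s.
Proof.
move=> G0 GS; have addS x : - N%:Z <= x < N%:Z ->
    moment N g (fun y => y < x + 1) = moment N g (fun y => y < x) + g x.
  move=> xN; rewrite -moment_add_point ?ltxx //; congr moment.
  by apply: set_eq_ext => y; lia.
elim/int_ind: s => [|n IH|n IH] sN; first by rewrite moment_vacuum0 G0.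
  by rewrite -addn1 PoszD addS ?IH ?GS //; lia.
have := GS (- n.+1%:Z); have := addS (- n.+1%:Z).
have -> : - n.+1%:Z + 1 = - n%:Z by lia.
rewrite IH; lia.
Qed.

Lemma window_sumS N f :
  window_sum N.+1 f = f (- N.+1%:Z) + window_sum N f + f N%:Z.
Proof.
rewrite /window_sum mulnS !add2n big_nat_recr // big_nat_recl //=.
congr (f _ + _ + f _); [lia | apply: eq_bigr => n _; congr f | ]; lia.
Qed.

Lemma excess_outside N B (x : int) : beta_bounded N B -> (x < - N%:Z) || (N%:Z <= x) ->
  excess B x = 0.
Proof.
move=> [below above] xN; rewrite /excess /indicator.
case: excluded_middle_informative => [Bx|nBx]; case: excluded_middle_informative => //=.
- by move=> nx; case/orP: xN => [|/above //]; lia.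
- by move=> xn; case/orP: xN => [/below //|]; lia.
Qed.

Lemma moment_widen N M g B : beta_bounded N B -> (N <= M)%N ->
  moment M g B = moment N g B.
Proof.
move=> bB; elim: M => [|M IH]; first by rewrite leqn0 => /eqP ->.
rewrite leq_eqVlt => /orP [/eqP <- //|]; rewrite ltnS => NM.
rewrite /moment window_sumS !(excess_outside bB) ?mul0r ?add0r ?addr0; try lia.
exact: IH.
Qed.

Lemma betaset_nil s : betaset [::] s = (fun x => x < s).
Proof.
apply: set_eq_ext => x; split=> [[j ->]|xs]; rewrite ?nth_nil; first lia.
by exists (absz (s - x - 1)%R); rewrite nth_nil; lia.
Qed.

Lemma betaset_cons a l s :
  betaset (a :: l) s = (fun x => betaset l (s - 1) x \/ x = a%:Z - 1 + s).
Proof.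
apply: set_eq_ext => x; split=> [[[|j] ->] /=|[[j ->]|->]].
- by right; lia.
- by left; exists j; lia.
- by exists j.+1 => /=; lia.
- by exists 0%N.
Qed.

Lemma partition_head_max a l j : is_partition (a :: l) -> (nth 0%N l j <= a)%N.
Proof.
have geq_trans : transitive geq by move=> y x z xy yz; apply: leq_trans yz xy.
move=> /(order_path_min geq_trans)/allP la.
by case: (ltnP j (size l)) => [/(mem_nth 0%N)/la | /(nth_default 0%N) ->].
Qed.

Definition beta_bound (l : seq nat) (s : int) : nat := size l + sumn l + absz s.

Lemma beta_bounded_betaset N l s : (beta_bound l s <= N)%N ->
  beta_bounded N (betaset l s).
Proof.
rewrite /beta_bound => lsN; split=> [x xN | x Nx [j xj]].
  by exists (absz (s - x - 1)%R); rewrite nth_default; lia.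
have : (nth 0%N l j <= sumn l)%N.
  elim: l {lsN xj} j => [|b l IH] [|j] //=; first exact: leq_addr.
  exact: leq_trans (IH j) (leq_addl _ _).
lia.
Qed.

Lemma moments_betaset_sized N l s : is_partition l -> (beta_bound l s <= N)%N ->
  charge N (betaset l s) = s /\ energy N (betaset l s) = 2 * (sumn l)%:Z + s ^+ 2.
Proof.
rewrite /beta_bound; elim: l s => [|a l IH] s /= la_part lsN.
  have sN : - N%:Z <= s <= N%:Z by lia.
  rewrite betaset_nil mulr0 add0r; split.
    exact: (moment_vacuum (G := id)).
  by apply: (moment_vacuum (G := fun x => x ^+ 2)) => // x; ring.
have [|charge_l energy_l] := IH (s - 1) (path_sorted la_part); first lia.
have nBm : ~ betaset l (s - 1) (a%:Z - 1 + s).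
  by move=> [j]; have := partition_head_max j la_part; lia.
rewrite betaset_cons /charge /energy !moment_add_point // -/(charge _ _) -/(energy _ _); lia.
Qed.

Lemma moments_betaset N l s : is_partition l -> beta_bounded N (betaset l s) ->
  charge N (betaset l s) = s /\ defect N (betaset l s) = 2 * (sumn l)%:Z.
Proof.
move=> l_part bB; have NM : (N <= N + beta_bound l s)%N by apply: leq_addr.
have [] := moments_betaset_sized l_part (leq_addl N (beta_bound l s)).
rewrite /defect /charge /energy !(moment_widen _ bB NM) => -> ->.
by split=> //; ring.
Qed.

Lemma beta_bounded_betaset_exists N B : beta_bounded N B ->
  exists2 l, is_partition l & B = betaset l ((size l)%:Z - N%:Z).
Proof.
move=> [below above].
suff cut m : exists2 l, is_partition l &
    (fun x => B x /\ x < m%:Z - N%:Z) = betaset l ((size l)%:Z - N%:Z).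
  have [l l_part Bl] := cut (2 * N)%N; exists l; rewrite // -Bl.
  apply: set_eq_ext => x; split=> [Bx | [] //]; split=> //.
  by case: (ltP x N%:Z) => [|Nx]; [lia | case: (above x Nx Bx)].
elim: m => [|m [l l_part Bl]].
  exists [::]; rewrite // betaset_nil; apply: set_eq_ext => x; rewrite /= sub0r.
  by split=> [[] | /below] //.
have head_lt : ((nth 0%N l 0)%:Z - 1 + ((size l)%:Z - N%:Z) < m%:Z - N%:Z).
  have : betaset l ((size l)%:Z - N%:Z) ((nth 0%N l 0)%:Z - 1 + ((size l)%:Z - N%:Z)).
    by exists 0%N.
  by rewrite -Bl => -[].
case: (classic (B (m%:Z - N%:Z))) => Bm; [exists ((m - size l)%N :: l) | exists l] => //.
- case: l l_part Bl head_lt => //= b l bl _ head_lt; rewrite bl andbT; lia.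
- rewrite betaset_cons /=; have -> : (size l).+1%:Z - N%:Z - 1 = (size l)%:Z - N%:Z by lia.
  rewrite -Bl; apply: set_eq_ext => x /=.
  have -> : (m - size l)%N%:Z - 1 + ((size l).+1%:Z - N%:Z) = m%:Z - N%:Z by lia.
  split=> [[Bx xm] | [[Bx xm] | ->]]; last by split=> //; lia.
    by case: (ltP x (m%:Z - N%:Z)) => xm'; [left | right; lia].
  by split=> //; lia.
- rewrite -Bl; apply: set_eq_ext => x; split=> -[Bx xm]; split=> //; last lia.
  case: (ltP x (m%:Z - N%:Z)) => // xm'.
  have xE : x = m%:Z - N%:Z by lia.
  by rewrite xE in Bx.
Qed.

Lemma defect_ge0 N B : beta_bounded N B -> 0 <= defect N B.
Proof.
move=> bB; have [l l_part Bl] := beta_bounded_betaset_exists bB.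
by rewrite Bl in bB *; rewrite (moments_betaset l_part bB).2.
Qed.

Lemma runnerE e i B : (i < e)%N -> runner e i B = (fun c => B (c * e%:Z + i%:Z)).
Proof.
move=> ie; apply: set_eq_ext => c; split=> [[b [Bb [eb ->]]] | Bc].
  by rewrite divzK // subrK.
exists (c * e%:Z + i%:Z); rewrite addrK mulzK ?dvdz_mull //; lia.
Qed.

Lemma beta_bounded_runner e i N B : (i < e)%N -> beta_bounded (e * N)%N B ->
  beta_bounded N (runner e i B).
Proof.
move=> ie [below above]; rewrite runnerE //; split=> x xN.
  by apply: below; rewrite PoszM; nia.
by apply: above; rewrite PoszM; nia.
Qed.

Lemma beta_bounded_runner_betaset e i N l s : (i < e)%N ->
  (beta_bound l s <= e * N)%N -> beta_bounded N (runner e i (betaset l s)).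
Proof. by move=> ie lsN; apply/beta_bounded_runner/beta_bounded_betaset. Qed.

Lemma runners_beta_bounded_exists (I : finType) e (l : I -> seq nat) (s : I -> int) :
  exists N, forall k i, (i < e)%N -> beta_bounded N (runner e i (betaset (l k) (s k))).
Proof.
exists (\max_k beta_bound (l k) (s k)) => k i ie.
apply: (beta_bounded_runner_betaset ie).
apply: leq_trans (leq_bigmax (F := fun k => beta_bound (l k) (s k)) k) _.
by apply: leq_pmull; apply: leq_ltn_trans ie.
Qed.

Lemma exists_eta e l s : exists rho t, is_eta e l s rho t.
Proof.
have pick i : {p : seq nat * int | (i < e)%N ->
    is_partition p.1 /\ runner e i (betaset l s) = betaset p.1 p.2}.
  apply: constructive_indefinite_description; case: (ltnP i e) => ie; last first.
    by exists ([::], 0).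
  have lsN : (beta_bound l s <= e * beta_bound l s)%N by apply: leq_pmull; lia.
  have [rho rho_part runner_rho] :=
    beta_bounded_betaset_exists (beta_bounded_runner_betaset ie lsN).
  by exists (rho, (size rho)%:Z - (beta_bound l s)%:Z).
exists (fun i => (sval (pick i)).1), (fun i => (sval (pick i)).2) => i ie.
by case: (pick i) => [[rho ti] /= /(_ ie) [rho_part E]]; split=> // x; rewrite E.
Qed.

Lemma moments_runner_eta e l s rho t N i : is_eta e l s rho t -> (i < e)%N ->
  beta_bounded N (runner e i (betaset l s)) ->
  charge N (runner e i (betaset l s)) = t i /\
  defect N (runner e i (betaset l s)) = 2 * (sumn (rho i))%:Z.
Proof.
by move=> eta ie; have [rho_part /set_eq_ext ->] := eta i ie; apply: moments_betaset.
Qed.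

Lemma eweight_defect e l s rho t N : is_eta e l s rho t ->
  (forall i, (i < e)%N -> beta_bounded N (runner e i (betaset l s))) ->
  2 * (eweight e rho)%:Z = \sum_(0 <= i < e) defect N (runner e i (betaset l s)).
Proof.
move=> eta bB; rewrite /eweight -natz natr_sum mulr_sumr big_mkord.
apply: eq_bigr => i _.
by rewrite (moments_runner_eta eta (ltn_ord i) (bB i (ltn_ord i))).2 /psize -natz.
Qed.

Lemma rouquier_counterexample e l s : ~ rouquier e l s ->
  exists rho t, is_eta e l s rho t /\
    exists2 i, (i.+1 < e)%N & t i.+1 - t i + 1 < (eweight e rho)%:Z.
Proof.
move=> notR; apply: NNPP => noCE; apply: notR => rho t eta i ie.
by rewrite leNgt; apply/negP => bad; apply: noCE; exists rho, t; split=> //; exists i.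
Qed.

Lemma sumr_const_int m (x : int) : \sum_(0 <= j < m) x = m%:Z * x.
Proof. by rewrite sumr_const_nat subn0 -mulr_natl natz. Qed.

Lemma ler_sum_nat_term m n k (F : nat -> int) :
  (forall i, (m <= i < n)%N -> 0 <= F i) -> (m <= k < n)%N ->
  F k <= \sum_(m <= i < n) F i.
Proof.
move=> F0 /andP [mk kn].
have sum_ge0 a b : (m <= a)%N -> (b <= n)%N -> 0 <= \sum_(a <= i < b) F i.
  move=> ma bn; rewrite big_nat_cond; apply: sumr_ge0 => i /andP [/andP [ai ib] _].
  by apply: F0; rewrite (leq_trans ma ai) (leq_trans ib bn).
rewrite (big_cat_nat mk (ltnW kn)) [\sum_(k <= i < n) _]big_ltn //= addrCA lerDl.
by apply: addr_ge0; apply: sum_ge0; lia.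
Qed.

Lemma ler_sum_nat_adjacent m n k (F : nat -> int) :
  (forall i, (m <= i < n)%N -> 0 <= F i) -> (m <= k)%N -> (k.+1 < n)%N ->
  F k + F k.+1 <= \sum_(m <= i < n) F i.
Proof.
move=> F0 mk kn; rewrite (@big_cat_nat _ _ _ k.+1) /=; [|lia|lia].
by apply: lerD; apply: ler_sum_nat_term => [i ?|]; try apply: F0; lia.
Qed.

Definition pronic (u : int) : int := u * (u + 1).

Definition pronic_pairs (r : nat) (c : nat -> int) : int :=
  \sum_(0 <= k < r) \sum_(0 <= j < k) pronic (c k - c j).

Lemma pronic_ge0 u : 0 <= pronic u.
Proof. by rewrite /pronic; case: (lerP 0 u) => u0; nia. Qed.

Lemma pronic_add_ge a b : 2 * (b - a - 1) <= pronic a + pronic b.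
Proof.
have := pronic_ge0 (a + 1); have := pronic_ge0 (b - 1); rewrite /pronic; nia.
Qed.

Lemma pronic_pairs_ge0 r c : 0 <= pronic_pairs r c.
Proof. by do 2 apply: sumr_ge0 => ? _; apply: pronic_ge0. Qed.

Lemma pronic_pairsS r c :
  pronic_pairs r.+1 c = pronic_pairs r c + \sum_(0 <= j < r) pronic (c r - c j).
Proof. by rewrite /pronic_pairs big_nat_recr. Qed.

Lemma pronic_pairsE r c : pronic_pairs r c =
  \sum_(0 <= j < r) (r%:Z * c j ^+ 2 + (2 * j%:Z + 1 - r%:Z) * c j)
  - (\sum_(0 <= j < r) c j) ^+ 2.
Proof.
elim: r => [|r IH]; first by rewrite /pronic_pairs !big_geq.
have rS : r.+1%:Z = r%:Z + 1 by lia.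
rewrite pronic_pairsS IH !big_nat_recr //=.
rewrite [\sum_(0 <= j < r) pronic _](eq_bigr (fun j =>
    (c j ^+ 2 - c j) + (c r ^+ 2 + c r) - 2 * c r * c j)); last first.
  by move=> j _; rewrite /pronic; ring.
rewrite [\sum_(0 <= j < r) (r.+1%:Z * _ + _)](eq_bigr (fun j =>
    (r%:Z * c j ^+ 2 + (2 * j%:Z + 1 - r%:Z) * c j) + (c j ^+ 2 - c j))); last first.
  by move=> j _; rewrite rS; ring.
by rewrite !sumrB !big_split /= !sumr_const_int -!mulr_sumr rS; ring.
Qed.

Lemma pronic_pairs_pair_ge r c c' k0 : (k0 < r)%N ->
  2 * (\sum_(0 <= k < r) (c' k - c k) - r%:Z * (c' k0 - c k0 + 1) + 1)
  <= pronic_pairs r c + pronic_pairs r c'.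
Proof.
elim: r => // r IH; rewrite ltnS leq_eqVlt => /orP [/eqP -> | k0r];
  rewrite !pronic_pairsS big_nat_recr //= -(addn1 r) PoszD.
  have := addr_ge0 (pronic_pairs_ge0 r c) (pronic_pairs_ge0 r c').
  have : 2 * (\sum_(0 <= j < r) (c' j - c j) - r%:Z * (c' r - c r + 1))
      <= \sum_(0 <= j < r) pronic (c r - c j) + \sum_(0 <= j < r) pronic (c' r - c' j).
    rewrite -big_split /= -sumr_const_int -sumrB mulr_sumr; apply: ler_sum => j _.
    by have := pronic_add_ge (c' r - c' j) (c r - c j); lia.
  lra.
have := ler_sum_nat_term (F := fun j => pronic (c r - c j) + pronic (c' r - c' j))
  (fun j _ => addr_ge0 (pronic_ge0 _) (pronic_ge0 _)) (k := k0) (m := 0) (n := r).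
rewrite big_split /= => /(_ k0r).
have := IH k0r; have := pronic_add_ge (c r - c k0) (c' r - c' k0).
lra.
Qed.

Lemma weight_gap e r i0 k0 (c d : nat -> nat -> int) (T : nat -> int) (W W0 : nat) :
  (k0 < r)%N -> (i0.+1 < e)%N ->
  (forall i k, (i < e)%N -> (k < r)%N -> 0 <= d i k) ->
  (forall i, (i < e)%N -> T i = \sum_(0 <= k < r) c i k) ->
  2 * W%:Z = \sum_(0 <= i < e) (r%:Z * \sum_(0 <= k < r) d i k + pronic_pairs r (c i)) ->
  2 * W0%:Z = \sum_(0 <= i < e) d i k0 ->
  c i0.+1 k0 - c i0 k0 + 1 < W0%:Z ->
  T i0.+1 - T i0 + r%:Z < W%:Z.
Proof.
move=> k0r i0e d_ge0 T_sum; rewrite big_split -mulr_sumr /= => W_sum W0_sum gap.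
have d_k0 : 2 * W0%:Z <= \sum_(0 <= i < e) \sum_(0 <= k < r) d i k.
  rewrite W0_sum big_nat_cond [X in _ <= X]big_nat_cond; apply: ler_sum => i.
  rewrite andbT => ie; apply: ler_sum_nat_term => [k ?|]; [apply: d_ge0 | ]; lia.
have pairs_i0 := ler_sum_nat_adjacent (F := fun i => pronic_pairs r (c i))
  (fun i _ => pronic_pairs_ge0 r (c i)) (leq0n i0) i0e.
have := pronic_pairs_pair_ge (c i0) (c i0.+1) k0r.
rewrite sumrB -!T_sum; try lia.
have : r%:Z * (c i0.+1 k0 - c i0 k0 + 2) <= r%:Z * W0%:Z by apply: ler_wpM2l; lia.
have : r%:Z * (2 * W0%:Z) <= r%:Z * \sum_(0 <= i < e) \sum_(0 <= k < r) d i k.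
  by apply: ler_wpM2l.
lra.
Qed.

Lemma window_sum_mul m N f : (0 < m)%N ->
  window_sum (m * N)%N f = \sum_(0 <= j < m) window_sum N (fun q => f (q * m%:Z + j%:Z)).
Proof.
move=> m0; rewrite /window_sum mulnA [(2 * m)%N]mulnC -mulnA mulnC big_nat_mul.
under eq_bigr => t _ do rewrite -{1}[(t * m)%N]add0n big_addn mulSn addnK.
rewrite exchange_big_nat; apply: eq_bigr => j _; apply: eq_bigr => t _.
by congr f; rewrite PoszD !PoszM; ring.
Qed.

Definition interleaved (r : nat) (C : nat -> int -> Prop) (D : int -> Prop) : Prop :=
  forall q (j : nat), (j < r)%N -> D (q * r%:Z + j%:Z) <-> C j q.

Lemma excess_interleaved r C D q j : interleaved r C D -> (j < r)%N ->
  excess D (q * r%:Z + j%:Z) = excess (C j) q.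
Proof.
move=> CD jr; rewrite /excess /indicator (propositional_extensionality _ _ (CD q j jr)).
by do 3 case: excluded_middle_informative => //=; nia.
Qed.

Lemma moment_interleaved r N g C D : (0 < r)%N -> interleaved r C D ->
  moment (r * N)%N g D = \sum_(0 <= j < r) moment N (fun q => g (q * r%:Z + j%:Z)) (C j).
Proof.
move=> r0 CD; rewrite /moment window_sum_mul //; apply: eq_big_nat => j jr.
by apply: eq_bigr => n _; rewrite (excess_interleaved _ CD).
Qed.

Lemma charge_interleaved r N C D : (0 < r)%N -> interleaved r C D ->
  charge (r * N)%N D = \sum_(0 <= j < r) charge N (C j).
Proof. exact: moment_interleaved. Qed.

Lemma energy_interleaved r N C D : (0 < r)%N -> interleaved r C D ->
  energy (r * N)%N D =
  \sum_(0 <= j < r) (r%:Z * energy N (C j) + (2 * j%:Z + 1 - r%:Z) * charge N (C j)).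
Proof.
move=> r0 CD; rewrite /energy (moment_interleaved N _ r0 CD); apply: eq_bigr => j _.
rewrite /charge /moment /window_sum !mulr_sumr -big_split; apply: eq_bigr => n _ /=.
ring.
Qed.

Lemma defect_interleaved r N C D : (0 < r)%N -> interleaved r C D ->
  defect (r * N)%N D =
  r%:Z * \sum_(0 <= j < r) defect N (C j) + pronic_pairs r (fun j => charge N (C j)).
Proof.
move=> r0 CD; rewrite /defect (energy_interleaved N r0 CD) (charge_interleaved N r0 CD).
rewrite pronic_pairsE mulr_sumr addrA -big_split /=; congr (_ - _); apply: eq_bigr => j _.
rewrite /defect; ring.
Qed.

Lemma beta_bounded_interleaved r N C D : (0 < r)%N -> interleaved r C D ->
  (forall j, (j < r)%N -> beta_bounded N (C j)) -> beta_bounded (r * N)%N D.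
Proof.
move=> r0 CD bC.
suff block a : exists q (j : nat), (j < r)%N /\ a = q * r%:Z + j%:Z.
  split=> a aN; have [q [j [jr aE]]] := block a; rewrite aE CD // in aN *.
    by apply: (bC j jr).1; rewrite PoszM in aN; nia.
  by apply: (bC j jr).2; rewrite PoszM in aN; nia.
have r0' : r%:Z != 0 by lia.
have mr : (a %% r%:Z)%Z < r%:Z by apply: ltz_pmod; lia.
exists (a %/ r%:Z)%Z, (absz (a %% r%:Z)%Z).
by rewrite -ltz_nat gez0_abs ?modz_ge0 // -divz_eq.
Qed.

Lemma euclid_unique (m a a' i i' : int) : 0 <= i < m -> 0 <= i' < m ->
  a * m + i = a' * m + i' -> a = a' /\ i = i'.
Proof.
move=> im i'm E; have aa' : a = a' by nia.
by split=> //; rewrite aa' in E; lia.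
Qed.

(* [psi_k] puts component [k] (counted from 1) into slot [r - k] of each block of [r] beads. *)
Lemma runner_uglov_interleaved e r (la : 'I_r.+1 -> seq nat) (s : 'I_r.+1 -> int) i :
  (i < e)%N ->
  interleaved r.+1
    (fun j => runner e i (betaset (la (inord (r - j))) (s (inord (r - j)))))
    (runner e i (uglov_set e la s)).
Proof.
move=> ie q j jr; rewrite !runnerE //; split=> [[k [x [Bx]]] | Bq].
  have e0 : 0 < e%:Z by lia.
  have kr := ltn_ord k.
  rewrite /psi => /euclid_unique [||E1 E2]; first lia.
    by rewrite modz_ge0 ?ltz_pmod //; lia.
  have [] : q = (x %/ e%:Z)%Z /\ j%:Z = r.+1%:Z - k.+1%:Z.
    by apply: (@euclid_unique r.+1%:Z); [lia | lia | rewrite E1; ring].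
  move=> -> jk; have -> : inord (r - j) = k by apply: ord_inj; rewrite inordK; lia.
  by rewrite E2 -divz_eq.
exists (inord (r - j)), (q * e%:Z + i%:Z); split=> //.
rewrite /psi divzMDl ?divz_small ?modzMDl ?modz_small ?inordK; try lia.
have -> : (r - j).+1%:Z = r.+1%:Z - j%:Z by lia.
ring.
Qed.

Theorem lemma3p3 (e r : nat) (he : (2 <= e)%N) (hr : (1 <= r)%N)
  (la : 'I_r -> seq nat) (s : 'I_r -> int)
  (hla : forall k, is_partition (la k))
  (hnot : ~ (forall k : 'I_r, rouquier e (la k) (s k)))
  (lat : seq nat) (st : int) (hlat : is_partition lat)
  (hpsi : set_eq (betaset lat st) (@uglov_set e r la s)) :
  ~ r_rouquier e r lat st.
Proof.
(* Only the beta-sets of [la] and [lat] matter. *)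
move: hr la s hla hnot hpsi; case: r => [//|r] _ la s _ hnot /set_eq_ext Psi rouq.
have [k0 /rouquier_counterexample [rho0 [t0 [eta0 [i0 i0e bad]]]]] := not_all_ex_not _ _ hnot.
have [P [T etaP]] := exists_eta e lat st.
apply/negP: (rouq P T etaP i0 i0e); rewrite -ltNge.
have [N bN] := runners_beta_bounded_exists e la s.
pose C i j := runner e i (betaset (la (inord (r - j))) (s (inord (r - j)))).
have C_k0 i : C i (r - k0)%N = runner e i (betaset (la k0) (s k0)).
  by rewrite /C subKn ?inord_val // -ltnS.
have CP i : (i < e)%N -> interleaved r.+1 (C i) (runner e i (betaset lat st)).
  by move=> ie; rewrite Psi; apply: runner_uglov_interleaved.
have bP i : (i < e)%N -> beta_bounded (r.+1 * N)%N (runner e i (betaset lat st)).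
  by move=> ie; apply: beta_bounded_interleaved (CP i ie) (fun j _ => bN _ i ie).
apply: (@weight_gap e r.+1 i0 (r - k0) (fun i j => charge N (C i j))
  (fun i j => defect N (C i j)) T _ (eweight e rho0)) => //.
- lia.
- by move=> i j ie _; apply/defect_ge0/bN.
- move=> i ie; rewrite -(moments_runner_eta etaP ie (bP i ie)).1.
  by have := charge_interleaved N (ltn0Sn r) (CP i ie).
- rewrite (eweight_defect etaP bP); apply: eq_big_nat => i /andP [_ ie].
  by have := defect_interleaved N (ltn0Sn r) (CP i ie).
- by rewrite (eweight_defect eta0 (bN k0)); apply: eq_big_nat => i _; rewrite C_k0.
- rewrite !C_k0 (moments_runner_eta eta0 _ (bN k0 _ i0e)).1 //.
  by rewrite (moments_runner_eta eta0 _ (bN k0 _ (ltnW i0e))).1 //; lia.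
Qed.
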